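(* For every pair of positive integers $(m,n)$ there exists a nonzero bounded big Hankel operator $\Gamma:H^2(\mathbb T^2)\to H^2(\mathbb T^2)^\perp$ of finite type $(m,n)$ such that $\sigma_{pq}(\Gamma)=0$ for all $p>m$ and $q>n$.
   Context: $H^2(\mathbb T^2)$ is the subspace of $L^2(\mathbb T^2)$ of functions with Fourier coefficients supported in $\{m,n\ge0\}$, and $P$ is its orthogonal projection. A big Hankel operator is an operator of the form $\Gamma_\phi f=(I-P)(\phi f)$ with $\phi\in L^2(\mathbb T^2)$. A closed subspace $\mathcal I\subset H^2(\mathbb T^2)$ has finite bi-codimension $(m,n)$ if $\mathcal I=V_1\otimes V_2$ (closed span of products $f(x)g(y)$) with $V_1,V_2\subset H^2(\mathbb T)$ closed of codimensions $m$ and $n$. A bounded Hankel operator is of finite type $(m,n)$ if its kernel has finite bi-codimension $(m,n)$. For a bounded Hankel operator $\Gamma$ and integers $p,q\ge0$, $$\sigma_{pq}(\Gamma)=\inf\{\|\Gamma|_{\mathcal I}\|\},$$ where the infimum runs over closed subspaces $\mathcal I\subset H^2(\mathbb T^2)$ invariant under multiplication by $e^{ix}$ and by $e^{iy}$ that have finite bi-codimension at most $(p,q)$. Equivalently, these are the subspaces $\mathcal I=b_1(x)b_2(y)H^2(\mathbb T^2)$ with $b_1$, $b_2$ finite Blaschke products having at most $p$ and $q$ factors, respectively. *)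

(* L^2(T^2) is modelled on the Fourier side as
   l^2(Z^2): a function f on T^2 is represented by its Fourier coefficients
   (int * int -> R[i]); L^2(T) likewise by int -> R[i]. *)
From HB Require Import structures.
From mathcomp Require Import all_boot all_order all_algebra.
From mathcomp Require Import complex.
From mathcomp Require Import all_classical all_reals all_analysis.
Set Implicit Arguments. Unset Strict Implicit. Unset Printing Implicit Defensive.
Import Order.TTheory GRing.Theory Num.Theory numFieldNormedType.Exports.
Local Open Scope ring_scope.
Local Open Scope ring_scope.
Local Open Scope classical_set_scope.

Section Hankel.
Variable R : realType.
Local Notation C := (R[i]).

Definition sqmod (z : C) : R := complex.Re z ^+ 2 + complex.Im z ^+ 2.

(* ||a||_2^2 in L^2(T^2) = l^2(Z^2) (Parseval), and in L^2(T) = l^2(Z) *)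
Definition l2norm2 (a : int * int -> C) : \bar R :=
  (\esum_(k in [set: int * int]) (sqmod (a k))%:E)%E.
Definition l2norm1 (a : int -> C) : \bar R :=
  (\esum_(k in [set: int]) (sqmod (a k))%:E)%E.

Definition H2_2 (f : int * int -> C) : Prop :=
  (l2norm2 f < +oo)%E /\ (forall k, (k.1 < 0) || (k.2 < 0) -> f k = 0).
Definition H2_1 (f : int -> C) : Prop :=
  (l2norm1 f < +oo)%E /\ (forall k, k < 0 -> f k = 0).

Definition box (N : nat) : seq (int * int) :=
  [seq ((x%:Z - N%:Z)%R, (y%:Z - N%:Z)%R) | x <- iota 0 N.*2.+1, y <- iota 0 N.*2.+1].

Definition csum2 (a : int * int -> C) : C :=
  Complex (limn ((fun N => complex.Re (\sum_(k <- box N) a k)) : R^nat))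
          (limn ((fun N => complex.Im (\sum_(k <- box N) a k)) : R^nat)).

(* Fourier coefficients of the product phi * f (a convolution, absolutely
   convergent for phi, f in L^2). *)
Definition mulF (phi f : int * int -> C) (k : int * int) : C :=
  csum2 (fun j => phi (k.1 - j.1, k.2 - j.2) * f j).

(* big Hankel operator Gamma_phi f = (I - P)(phi f) *)
Definition hankel (phi f : int * int -> C) : int * int -> C :=
  fun k => if (k.1 < 0) || (k.2 < 0) then mulF phi f k else 0.

Definition bounded_hankel (phi : int * int -> C) : Prop :=
  (l2norm2 phi < +oo)%E /\
  exists M : R, forall f, H2_2 f ->
    (l2norm2 (hankel phi f) <= (M ^+ 2)%:E * l2norm2 f)%E.

Definition closed_subspace1 (V : set (int -> C)) : Prop :=
  [/\ V `<=` H2_1, V (fun _ => 0),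
      (forall u v, V u -> V v -> V (fun k => u k + v k)),
      (forall (c : C) v, V v -> V (fun k => c * v k)) &
      (forall f, H2_1 f ->
         (forall e : R, 0 < e -> exists v, V v /\ (l2norm1 (fun k => (f k - v k)%R) < e%:E)%E) ->
         V f)].

Definition codim1 (V : set (int -> C)) (m : nat) : Prop :=
  exists e : 'I_m -> int -> C,
    (forall i, H2_1 (e i)) /\
    (forall f, H2_1 f -> exists (c : 'I_m -> C) (v : int -> C),
        V v /\ f = (fun k => v k + \sum_(i < m) c i * e i k)) /\
    (forall c : 'I_m -> C, V (fun k => \sum_(i < m) c i * e i k) -> forall i, c i = 0).

Definition tensor (g h : int -> C) : int * int -> C := fun k => g k.1 * h k.2.

Definition bitensor (V1 V2 : set (int -> C)) : set (int * int -> C) :=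
  [set F | forall e : R, 0 < e ->
     exists s : seq ((int -> C) * (int -> C)),
       (forall gh, gh \in s -> V1 gh.1 /\ V2 gh.2) /\
       (l2norm2 (fun k => (F k - \sum_(gh <- s) tensor gh.1 gh.2 k)%R) < e%:E)%E].

Definition bicodim (I : set (int * int -> C)) (m n : nat) : Prop :=
  exists V1 V2, [/\ closed_subspace1 V1, closed_subspace1 V2,
                    codim1 V1 m, codim1 V2 n & I = bitensor V1 V2].

Definition hankel_kernel (phi : int * int -> C) : set (int * int -> C) :=
  [set f | H2_2 f /\ hankel phi f = (fun _ => 0)].

Definition finite_type (phi : int * int -> C) (m n : nat) : Prop :=
  bicodim (hankel_kernel phi) m n.

(* multiplication by e^{ix} and e^{iy} on Fourier coefficients *)
Definition shiftx (f : int * int -> C) : int * int -> C := fun k => f (k.1 - 1, k.2).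
Definition shifty (f : int * int -> C) : int * int -> C := fun k => f (k.1, k.2 - 1).

(* sigma_pq(Gamma_phi) = 0, i.e. the infimum of ||Gamma|_I|| over closed
   subspaces I invariant under e^{ix}, e^{iy} of finite bi-codimension at
   most (p,q) is 0 *)
Definition sigma_zero (phi : int * int -> C) (p q : nat) : Prop :=
  forall eps : R, 0 < eps ->
    exists I : set (int * int -> C),
      [/\ (forall f, I f -> I (shiftx f)), (forall f, I f -> I (shifty f)),
          (exists p' q', [/\ (p' <= p)%N, (q' <= q)%N & bicodim I p' q']) &
          (forall f, I f -> (l2norm2 (hankel phi f) <= (eps ^+ 2)%:E * l2norm2 f)%E)].

End Hankel.

From HB Require Import structures.
From mathcomp Require Import all_boot all_order all_algebra.
From mathcomp Require Import complex.
From mathcomp Require Import all_classical all_reals all_analysis.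
From mathcomp Require Import ring lra zify.
Set Implicit Arguments. Unset Strict Implicit. Unset Printing Implicit Defensive.
Import Order.TTheory GRing.Theory Num.Theory numFieldNormedType.Exports.
Local Open Scope ring_scope.

(** The symbol [delta2 (-m, -n)], i.e. phi = e^{-i(mx+ny)}, has a single Fourier
    coefficient, so multiplication by phi shifts Fourier coefficients by (-m,-n) and
    Gamma_phi has norm at most 1.  Hence Gamma_phi f = 0 exactly when the coefficients
    of f vanish off the quadrant {k1 >= m, k2 >= n}: the kernel is
    e^{imx} e^{iny} H^2(T^2) = e^{imx} H^2(T) (x) e^{iny} H^2(T), and e^{idx} H^2(T) has
    codimension d (a complement is spanned by 1, e^{ix}, ..., e^{i(d-1)x}).  This kernel
    is invariant under both shifts and Gamma_phi vanishes on it, so it witnesses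
    sigma_pq(Gamma_phi) = 0 for all p >= m, q >= n.  Finally Gamma_phi 1 = phi <> 0
    because m, n > 0. *)

Section SquaredModulus.
Variable R : realType.
Implicit Types x y z : R[i].

Lemma sqmod_ge0 z : 0 <= sqmod z.
Proof. by rewrite /sqmod addr_ge0 // sqr_ge0. Qed.

Lemma EFin_sqmod_ge0 z : (0 <= (sqmod z)%:E)%E.
Proof. by rewrite lee_fin sqmod_ge0. Qed.

Lemma sqmod0 : sqmod (0 : R[i]) = 0.
Proof. by rewrite /sqmod /= expr0n /= addr0. Qed.

Lemma sqmodN z : sqmod (- z) = sqmod z.
Proof. by case: z => a b; rewrite /sqmod /= !sqrrN. Qed.

Lemma sqmodM x y : sqmod (x * y) = sqmod x * sqmod y.
Proof. by case: x => a b; case: y => c d; rewrite /sqmod /=; ring. Qed.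

Lemma sqmodD_le x y : sqmod (x + y) <= 2 * sqmod x + 2 * sqmod y.
Proof.
case: x => a b; case: y => c d; rewrite /sqmod /=.
have := sqr_ge0 (a - c); have := sqr_ge0 (b - d); nra.
Qed.

Lemma sqmod_eq0 z : (sqmod z == 0) = (z == 0).
Proof.
apply/eqP/eqP => [|->]; last exact: sqmod0.
case: z => a b; rewrite /sqmod /= => h.
have ha : a ^+ 2 = 0 by have := sqr_ge0 a; have := sqr_ge0 b; lra.
have hb : b ^+ 2 = 0 by have := sqr_ge0 a; have := sqr_ge0 b; lra.
by move/eqP: ha; move/eqP: hb; rewrite !sqrf_eq0 => /eqP -> /eqP ->.
Qed.

Lemma sqmod_small_eq0 z : (forall e : R, 0 < e -> sqmod z < e) -> z = 0.
Proof.
move=> small; apply/eqP; rewrite -sqmod_eq0 eq_le sqmod_ge0 andbT.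
by rewrite leNgt; apply/negP => /small; rewrite ltxx.
Qed.

End SquaredModulus.

Section SquareSummable.
Variables (R : realType) (T : choiceType).
Local Open Scope classical_set_scope.

Lemma ge0_mule_esumr (D : set T) (c : R) (f : T -> \bar R) :
  0 <= c -> (forall k, 0 <= f k)%E ->
  (c%:E * (\esum_(k in D) f k) = \esum_(k in D) c%:E * f k)%E.
Proof.
move=> c0 f0; rewrite /esum -ereal_supZl //; last first.
  by apply/set0P; exists 0%E, set0; [exact: fsets_set0|rewrite fsbig_set0].
congr ereal_sup; apply/seteqP; split => x /=.
  by move=> [y [A hA <-] <-]; exists A => //; rewrite ge0_mule_fsumr.
by move=> [A hA <-]; exists (\sum_(i \in A) f i)%E; [exists A|rewrite ge0_mule_fsumr].
Qed.

Implicit Types a b : T -> R[i].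

Definition l2norm a : \bar R := (\esum_(k in [set: T]) (sqmod (a k))%:E)%E.

Definition square_summable a := (l2norm a < +oo)%E.

Lemma l2norm_ge0 a : (0 <= l2norm a)%E.
Proof. by apply: esum_ge0 => k _; exact: EFin_sqmod_ge0. Qed.

Lemma le_l2norm a b : (forall k, sqmod (a k) <= sqmod (b k)) -> (l2norm a <= l2norm b)%E.
Proof. by move=> le_ab; apply: le_esum => k _; rewrite lee_fin. Qed.

Lemma sqmod_le_l2norm a k : ((sqmod (a k))%:E <= l2norm a)%E.
Proof.
apply: esum_ge; exists [set k]; first by split => //; exact: finite_set1.
by rewrite fsbig_set1.
Qed.

Lemma l2norm_cst0 : l2norm (fun _ => 0) = 0%E.
Proof. by rewrite /l2norm esum1 // => k _; rewrite sqmod0. Qed.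

Lemma l2normZ (c : R[i]) a : l2norm (fun k => c * a k) = ((sqmod c)%:E * l2norm a)%E.
Proof.
rewrite ge0_mule_esumr ?sqmod_ge0 //; last by move=> k; exact: EFin_sqmod_ge0.
by apply: eq_esum => k _; rewrite sqmodM.
Qed.

Lemma l2normD_le a b :
  (l2norm (fun k => (a k + b k)%R) <= 2%:E * l2norm a + 2%:E * l2norm b)%E.
Proof.
rewrite !ge0_mule_esumr // -?esumD; last 4 first.
- by move=> k _; rewrite -EFinM lee_fin mulr_ge0 // sqmod_ge0.
- by move=> k _; rewrite -EFinM lee_fin mulr_ge0 // sqmod_ge0.
- by move=> k; exact: EFin_sqmod_ge0.
- by move=> k; exact: EFin_sqmod_ge0.
by apply: le_esum => k _; rewrite -!EFinM -EFinD lee_fin sqmodD_le.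
Qed.

Lemma l2norm_reindex (e : T -> T) a : bijective e -> l2norm (a \o e) = l2norm a.
Proof.
move=> be; rewrite /l2norm [RHS](reindex_esum [set: T] [set: T] e) //.
by rewrite (setTT_bijective e).
Qed.

Lemma square_summable_le a b :
  (forall k, sqmod (a k) <= sqmod (b k)) -> square_summable b -> square_summable a.
Proof. by move=> le_ab; apply: le_lt_trans; exact: le_l2norm. Qed.

Lemma square_summable0 : square_summable (fun _ => 0).
Proof. by rewrite /square_summable l2norm_cst0. Qed.

Lemma square_summableD a b :
  square_summable a -> square_summable b -> square_summable (fun k => a k + b k).
Proof.
move=> sa sb; rewrite /square_summable (le_lt_trans (l2normD_le a b)) //.
by apply: lte_add_pinfty; rewrite lte_mul_pinfty.
Qed.

Lemma square_summableZ (c : R[i]) a :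
  square_summable a -> square_summable (fun k => c * a k).
Proof.
by move=> sa; rewrite /square_summable l2normZ lte_mul_pinfty // EFin_sqmod_ge0.
Qed.

Lemma square_summableB a b :
  square_summable a -> square_summable b -> square_summable (fun k => a k - b k).
Proof.
move=> sa sb; apply: square_summableD => //.
by apply: square_summable_le sb => k; rewrite sqmodN.
Qed.

Lemma square_summable_sum (I : eqType) (s : seq I) (F : I -> T -> R[i]) :
  (forall i, i \in s -> square_summable (F i)) ->
  square_summable (fun k => \sum_(i <- s) F i k).
Proof.
elim: s => [|i s IH] sF.
  by apply: square_summable_le square_summable0 => k; rewrite big_nil.
under eq_fun do rewrite big_cons.
apply: square_summableD; first by apply: sF; rewrite mem_head.
by apply: IH => j js; apply: sF; rewrite in_cons js orbT.
Qed.

Lemma square_summable_finsupp (s : seq T) a :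
  (forall k, k \notin s -> a k = 0) -> square_summable a.
Proof.
move=> supp_a; rewrite /square_summable /l2norm.
have -> : (\esum_(k in [set: T]) (sqmod (a k))%:E =
           \esum_(k in [set` s]) (sqmod (a k))%:E)%E.
  rewrite [RHS]esum_mkcond; apply: eq_esum => k _.
  case: ifPn => // ks; rewrite supp_a ?sqmod0 //.
  by apply: contraNN ks; rewrite in_setE.
rewrite esum_fset ?finite_seq //; last by move=> k _; exact: EFin_sqmod_ge0.
by rewrite fsumEFin ?finite_seq // ltry.
Qed.

Lemma square_summable_tail a (eps : R) : square_summable a -> 0 < eps ->
  exists s : seq T, (l2norm (fun k => if k \in s then 0%R else a k) < eps%:E)%E.
Proof.
move=> sa eps0.
have nfin : l2norm a \is a fin_num by rewrite ge0_fin_numE ?l2norm_ge0.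
have : (l2norm a - eps%:E < l2norm a)%E by rewrite lteBlDr // lteDl // lte_fin.
move=> /ereal_sup_gt [_ [X [finX _] <-]] lt_head.
set s := finmap.enum_fset (fset_set X).
have mem_s k : (k \in s) = (k \in X) := in_fset_set finX k.
exists s; move: lt_head; set head := (\sum_(i \in X) _)%E => lt_head.
have tailE : l2norm (fun k => if k \in s then 0%R else a k) =
    (\esum_(i in [set: T] `&` ~` X) (sqmod (a i))%:E)%E.
  rewrite esum_mkcondr; apply: eq_esum => k _.
  by rewrite mem_s in_setC; case: ifPn; rewrite ?sqmod0.
have splitE : l2norm a = (head + \esum_(i in [set: T] `&` ~` X) (sqmod (a i))%:E)%E.
  rewrite /l2norm (esumID X) => [|k _]; last exact: EFin_sqmod_ge0.
  by rewrite setTI esum_fset // => k _; exact: EFin_sqmod_ge0.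
rewrite tailE; move: lt_head nfin; rewrite splitE; set tail := (\esum_(i in _) _)%E.
move=> lt_head; rewrite fin_numD => /andP [hf tf].
by rewrite -(fineK hf) -(fineK tf) -EFinD !lte_fin in lt_head *; lra.
Qed.

End SquareSummable.

Section ShiftedHardySpaces.
Variable R : realType.
Local Notation C := R[i].
Local Open Scope classical_set_scope.

Lemma l2norm2E (a : int * int -> C) : l2norm2 a = l2norm a. Proof. by []. Qed.

Lemma square_summable_tensor (g h : int -> C) :
  square_summable g -> square_summable h -> square_summable (tensor g h).
Proof.
move=> sg sh.
have hfin : l2norm h \is a fin_num by rewrite ge0_fin_numE ?l2norm_ge0.
rewrite /square_summable /l2norm.
have -> : [set: int * int] = [set: int] `*`` (fun _ => [set: int]).
  by apply/seteqP; split => -[x y].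
rewrite -(esum_esum (a := fun i j => (sqmod (tensor g h (i, j)))%:E)); last first.
  by move=> i j _ _; exact: EFin_sqmod_ge0.
under eq_esum => i _.
  under eq_esum => j _ do rewrite /tensor /= sqmodM EFinM.
  rewrite -ge0_mule_esumr ?sqmod_ge0 //; last by move=> j; exact: EFin_sqmod_ge0.
  rewrite -[X in (_ * X)%E](fineK hfin) muleC.
  over.
rewrite -ge0_mule_esumr ?fine_ge0 ?l2norm_ge0 //; last by move=> i; exact: EFin_sqmod_ge0.
by rewrite lte_mul_pinfty // lee_fin fine_ge0 // l2norm_ge0.
Qed.

Definition delta1 (j : int) : int -> C := fun k => if k == j then 1 else 0.
Definition delta2 (j : int * int) : int * int -> C := fun k => if k == j then 1 else 0.

Lemma square_summable_delta1 j : square_summable (delta1 j).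
Proof.
by apply: (square_summable_finsupp (s := [:: j])) => k; rewrite inE /delta1 => /negPf ->.
Qed.

Lemma square_summable_delta2 j : square_summable (delta2 j).
Proof.
by apply: (square_summable_finsupp (s := [:: j])) => k; rewrite inE /delta2 => /negPf ->.
Qed.

Lemma tensorZ_delta1 (c : C) a b :
  tensor (fun x => c * delta1 a x) (delta1 b) = (fun k => c * delta2 (a, b) k).
Proof.
apply/funext => -[x y]; rewrite /tensor /delta1 /delta2 /=.
have -> : ((x, y) == (a, b)) = (x == a) && (y == b) by [].
by case: (x == a); case: (y == b); rewrite /= ?mulr1 ?mulr0.
Qed.

Lemma sum_delta1_ord d (c : 'I_d -> C) (i : 'I_d) : \sum_(j < d) c j * delta1 j i = c i.
Proof.
rewrite (bigD1 i) //= /delta1 eqxx mulr1 big1 ?addr0 // => j ji.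
by case: eqP => [/eqP|]; rewrite ?mulr0 // eqz_nat (inj_eq val_inj) eq_sym (negPf ji).
Qed.

Lemma sum_delta1_neg d (c : 'I_d -> C) k : k < 0 -> \sum_(j < d) c j * delta1 j k = 0.
Proof.
move=> k_neg; rewrite big1 // => j _; rewrite /delta1.
by case: eqP => [k_j|]; [move: k_neg; rewrite k_j|rewrite mulr0].
Qed.

Lemma sum_delta2 (s : seq (int * int)) (F : int * int -> C) k : uniq s ->
  \sum_(j <- s) F j * delta2 j k = if k \in s then F k else 0.
Proof.
move=> s_uniq; case: ifPn => ks.
  rewrite (bigD1_seq k) //= /delta2 eqxx mulr1 big1_seq ?addr0 // => j /andP [jk _].
  by rewrite eq_sym (negPf jk) mulr0.
rewrite big1_seq // => j /andP [_ js]; rewrite /delta2.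
by case: eqP => [kj|]; [move: ks; rewrite kj js|rewrite mulr0].
Qed.

Lemma box_uniq N : uniq (box N).
Proof.
apply: allpairs_uniq; try exact: iota_uniq.
move=> [x y] [x' y'] _ _ /= [] h1 h2.
by congr pair; apply/eqP; move/eqP: h1; move/eqP: h2; lia.
Qed.

Lemma mem_box (a : int * int) N : (absz a.1 <= N)%N -> (absz a.2 <= N)%N -> a \in box N.
Proof.
case: a => a b /= ha hb.
have -> : (a, b) = ((absz (a + N%:Z))%:Z - N%:Z, (absz (b + N%:Z))%:Z - N%:Z).
  by congr pair; apply/eqP; lia.
by apply: (allpairs_f (fun x y : nat => (x%:Z - N%:Z, y%:Z - N%:Z))); rewrite mem_iota; lia.
Qed.

Lemma mulF_delta2 j f k : mulF (delta2 j) f k = f (k.1 - j.1, k.2 - j.2).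
Proof.
set k' := (k.1 - j.1, k.2 - j.2).
have sum_boxE N : (absz k'.1 + absz k'.2 <= N)%N ->
    \sum_(x <- box N) delta2 j (k.1 - x.1, k.2 - x.2) * f x = f k'.
  move=> large_N; have k'_box : k' \in box N.
    by apply: mem_box; apply: leq_trans large_N; rewrite (leq_addr, leq_addl).
  rewrite (bigD1_seq k') ?box_uniq //=.
  rewrite /delta2 ifT ?mul1r; last by rewrite /k' /= !subKr -surjective_pairing.
  rewrite big1_seq ?addr0 // => -[a b] /andP [ne_k' _].
  case: eqP => [j_ab|_]; last exact: mul0r.
  by move: ne_k'; rewrite /k' -j_ab /= !subKr eqxx.
have lim_eventually (u : R^nat) c : (\forall N \near \oo, u N = c) -> limn u = c.
  exact: lim_near_cst.
rewrite /mulF /csum2 (lim_eventually _ (complex.Re (f k'))); last first.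
  by exists (absz k'.1 + absz k'.2)%N => // N /= /sum_boxE ->.
rewrite (lim_eventually _ (complex.Im (f k'))); last first.
  by exists (absz k'.1 + absz k'.2)%N => // N /= /sum_boxE ->.
by case: (f k').
Qed.

Lemma hankel_delta2 j f k : hankel (delta2 j) f k =
  if (k.1 < 0) || (k.2 < 0) then f (k.1 - j.1, k.2 - j.2) else 0.
Proof. by rewrite /hankel mulF_delta2. Qed.

Lemma translate_bij (a b : int) : bijective (fun k : int * int => (k.1 + a, k.2 + b)).
Proof.
by exists (fun k : int * int => (k.1 - a, k.2 - b)) => -[x y] /=; congr pair; ring.
Qed.

Lemma square_summable_translate (a b : int) (F : int * int -> C) :
  square_summable F -> square_summable (fun k => F (k.1 + a, k.2 + b)).
Proof.
by rewrite /square_summable -(l2norm_reindex F (translate_bij a b)).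
Qed.

Lemma bounded_hankel_delta2 j : bounded_hankel (delta2 j).
Proof.
split; first exact: square_summable_delta2.
exists 1 => f _; rewrite expr1n mul1e !l2norm2E.
rewrite -(l2norm_reindex f (translate_bij (- j.1) (- j.2))).
apply: le_l2norm => k; rewrite hankel_delta2; case: ifP => _ //.
by rewrite sqmod0 sqmod_ge0.
Qed.

Lemma hankel_delta2_nontrivial j : (j.1 < 0) || (j.2 < 0) ->
  exists f, H2_2 f /\ hankel (delta2 j) f <> (fun _ => 0).
Proof.
move=> j_neg; exists (delta2 (0, 0)); split.
  split; first exact: square_summable_delta2.
  move=> [a b] /= ab_neg; rewrite /delta2.
  by case: eqP => // -[a0 b0]; move: ab_neg; rewrite a0 b0.
move=> /(congr1 (fun g => g j)); rewrite hankel_delta2 j_neg !subrr /delta2 eqxx.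
by move/eqP; rewrite oner_eq0.
Qed.

Definition shifted_H2_1 (d : nat) : set (int -> C) :=
  [set g | H2_1 g /\ forall k, k < d%:Z -> g k = 0].

Definition shifted_H2_2 (m n : nat) : set (int * int -> C) :=
  [set F | square_summable F /\ forall k, (k.1 < m%:Z) || (k.2 < n%:Z) -> F k = 0].

Lemma hankel_kernel_delta2 (m n : nat) :
  hankel_kernel (delta2 (- m%:Z, - n%:Z)) = shifted_H2_2 m n.
Proof.
apply/seteqP; split => F /=.
  move=> [[sF suppF] hF]; split => // -[a b] /= out.
  have [ab_neg|nonneg] := boolP ((a < 0) || (b < 0)); first exact: (suppF (a, b)).
  have := congr1 (fun g => g (a - m%:Z, b - n%:Z)) hF.
  rewrite hankel_delta2 /= ifT; last by move: out nonneg; lia.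
  by rewrite !opprK !subrK.
move=> [sF suppF]; split.
  by split => // -[a b] /= neg; apply: suppF => /=; move: neg; lia.
apply/funext => -[a b]; rewrite hankel_delta2; case: ifP => //= neg.
by apply: suppF => /=; move: neg; lia.
Qed.

Lemma closed_subspace1_shifted_H2_1 d : closed_subspace1 (shifted_H2_1 d).
Proof.
split.
- by move=> g [].
- by split; [split; [exact: square_summable0|]|].
- move=> u v [[su hu] zu] [[sv hv] zv]; split; first split.
  + exact: square_summableD.
  + by move=> k k_neg; rewrite hu ?hv ?addr0.
  + by move=> k k_small; rewrite zu ?zv ?addr0.
- move=> c v [[sv hv] zv]; split; first split.
  + exact: square_summableZ.
  + by move=> k k_neg; rewrite hv ?mulr0.
  + by move=> k k_small; rewrite zv ?mulr0.
- move=> f f_H2 approx; split => // k k_small; apply: sqmod_small_eq0 => e e0.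
  have [v [[_ zv] lte]] := approx e e0.
  by move: (le_lt_trans (sqmod_le_l2norm _ k) lte); rewrite zv // subr0 lte_fin.
Qed.

Lemma codim1_shifted_H2_1 d : codim1 (shifted_H2_1 d) d.
Proof.
exists (fun i : 'I_d => delta1 i); split; [|split].
- move=> i; split; first exact: square_summable_delta1.
  by move=> k k_neg; rewrite /delta1; case: eqP => // k_i; move: k_neg; rewrite k_i.
- move=> f [sf hf]; exists (fun i => f i%:Z).
  exists (fun k => f k - \sum_(i < d) f i%:Z * delta1 i k); split; last first.
    by apply: funext => k; rewrite subrK.
  split; first split.
  + apply: square_summableB => //; apply: square_summable_sum => i _.
    exact/square_summableZ/square_summable_delta1.
  + by move=> k k_neg; rewrite hf // sum_delta1_neg // subrr.
  + move=> k k_small; have [k_neg|k_ge0] := ltP k 0.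
      by rewrite hf // sum_delta1_neg // subrr.
    have k_lt_d : (absz k < d)%N by lia.
    have -> : k = (Ordinal k_lt_d)%:Z by rewrite /=; lia.
    by rewrite (sum_delta1_ord (fun i : 'I_d => f i%:Z)) subrr.
- move=> c [_ zc] i; have := zc i%:Z; rewrite sum_delta1_ord; apply.
  by rewrite ltz_nat ltn_ord.
Qed.

Lemma bitensor_sub_shifted_H2_2 m n :
  bitensor (shifted_H2_1 m) (shifted_H2_1 n) `<=` shifted_H2_2 m n.
Proof.
move=> F approx; split.
  have [s [sV lt1]] := approx 1 ltr01.
  set S := fun k => \sum_(gh <- s) tensor gh.1 gh.2 k.
  have sS : square_summable S.
    apply: square_summable_sum => gh /sV [[[sg _] _] [[sh _] _]].
    exact: square_summable_tensor.
  apply: (square_summable_le (b := fun k => (F k - S k) + S k)) => [k|].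
    by rewrite subrK.
  by apply: square_summableD => //; rewrite /square_summable (lt_trans lt1) ?ltry.
move=> k out; apply: sqmod_small_eq0 => e e0.
have [s [sV lte]] := approx e e0.
have S0 : \sum_(gh <- s) tensor gh.1 gh.2 k = 0.
  rewrite big1_seq // => gh /andP [_ /sV [[_ g0] [_ h0]]].
  by rewrite /tensor; case/orP: out => [/g0|/h0] ->; rewrite (mul0r, mulr0).
by move: (le_lt_trans (sqmod_le_l2norm _ k) lte); rewrite S0 subr0 lte_fin.
Qed.

Lemma shifted_H2_1_delta1 d a : d%:Z <= a -> shifted_H2_1 d (delta1 a).
Proof.
move=> le_da; split; first split; first exact: square_summable_delta1.
  by move=> k k_neg; rewrite /delta1; case: eqP => // k_a; move: k_neg le_da; rewrite k_a; lia.
by move=> k k_small; rewrite /delta1; case: eqP => // k_a; move: k_small le_da; rewrite k_a; lia.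
Qed.

Lemma shifted_H2_2_sub_bitensor m n :
  shifted_H2_2 m n `<=` bitensor (shifted_H2_1 m) (shifted_H2_1 n).
Proof.
move=> F [sF suppF] e e0.
have [s0 tail_lt] := square_summable_tail sF e0.
set s := [seq j <- undup s0 | (m%:Z <= j.1) && (n%:Z <= j.2)].
have [_ _ _ scale_closed _] := closed_subspace1_shifted_H2_1 m.
exists [seq ((fun x => F j * delta1 j.1 x), delta1 j.2) | j <- s]; split.
  move=> _ /mapP [j + ->]; rewrite mem_filter => /andP [/andP [mj nj] _] /=.
  by split; [apply: scale_closed|]; exact: shifted_H2_1_delta1.
apply: le_lt_trans tail_lt; apply: le_l2norm => k.
rewrite big_map; under eq_bigr do rewrite tensorZ_delta1 -surjective_pairing.
rewrite sum_delta2 ?filter_uniq ?undup_uniq //.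
case: ifPn => [_|ks]; first by rewrite subrr sqmod0 sqmod_ge0.
rewrite subr0; case: ifPn => // k_s0.
suff -> : F k = 0 by rewrite sqmod0.
by apply: suppF; move: ks; rewrite mem_filter mem_undup k_s0 andbT; lia.
Qed.

Lemma bitensor_shifted_H2_1 m n :
  bitensor (shifted_H2_1 m) (shifted_H2_1 n) = shifted_H2_2 m n.
Proof.
by apply/seteqP; split; [exact: bitensor_sub_shifted_H2_2|exact: shifted_H2_2_sub_bitensor].
Qed.

Lemma bicodim_shifted_H2_2 m n : bicodim (shifted_H2_2 m n) m n.
Proof.
exists (shifted_H2_1 m), (shifted_H2_1 n).
split; try exact: closed_subspace1_shifted_H2_1; try exact: codim1_shifted_H2_1.
by rewrite bitensor_shifted_H2_1.
Qed.

Lemma shiftx_shifted_H2_2 m n F : shifted_H2_2 m n F -> shifted_H2_2 m n (shiftx F).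
Proof.
move=> [sF suppF]; split.
  have -> : shiftx F = (fun k => F (k.1 + -1, k.2 + 0)).
    by apply: funext => k; rewrite /shiftx addr0.
  exact: square_summable_translate.
by move=> [a b] /= out; rewrite /shiftx /=; apply: suppF => /=; move: out; lia.
Qed.

Lemma shifty_shifted_H2_2 m n F : shifted_H2_2 m n F -> shifted_H2_2 m n (shifty F).
Proof.
move=> [sF suppF]; split.
  have -> : shifty F = (fun k => F (k.1 + 0, k.2 + -1)).
    by apply: funext => k; rewrite /shifty addr0.
  exact: square_summable_translate.
by move=> [a b] /= out; rewrite /shifty /=; apply: suppF => /=; move: out; lia.
Qed.

End ShiftedHardySpaces.

Theorem mainTheorem9 (R : realType) (m n : nat) (hm : (0 < m)%N) (hn : (0 < n)%N) :
  exists phi : int * int -> R[i],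
    [/\ bounded_hankel phi,
        (exists f, H2_2 f /\ hankel phi f <> (fun _ => 0)),
        finite_type phi m n &
        forall p q : nat, (m < p)%N -> (n < q)%N -> sigma_zero phi p q].
Proof.
exists (delta2 R (- m%:Z, - n%:Z)); split.
- exact: bounded_hankel_delta2.
- by apply: hankel_delta2_nontrivial; rewrite /= oppr_lt0 ltz_nat hm.
- by rewrite /finite_type hankel_kernel_delta2; exact: bicodim_shifted_H2_2.
- move=> p q mp nq eps _; exists (@shifted_H2_2 R m n); split.
  + exact: shiftx_shifted_H2_2.
  + exact: shifty_shifted_H2_2.
  + by exists m, n; split; [exact: ltnW|exact: ltnW|exact: bicodim_shifted_H2_2].
  + move=> f; rewrite -hankel_kernel_delta2 => -[_ ->].
    by rewrite l2norm2E l2norm_cst0 mule_ge0 ?lee_fin ?sqr_ge0 ?l2norm_ge0.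
Qed.
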